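(* Let $\mathcal A$ be the category of all topological abelian groups and $\mathcal A_2$ the category of Hausdorff topological abelian groups. For every subcategory $\mathcal B\subseteq\mathcal A$ (resp. $\mathcal B\subseteq\mathcal A_2$) there exists a subcategory $\mathcal B^{\otimes}\supseteq\mathcal B$ of $\mathcal A$ (resp. of $\mathcal A_2$) that has tensor product.
   Context: A continuous bihomomorphism $b:G\times H\to A$ is separately a continuous homomorphism in each variable and continuous at $(0,0)$. A subcategory $\mathcal C$ has tensor product if for all $G,H\in\mathcal C$ there is a pair $(T,\otimes_{\mathcal C})$ with $T\in\mathcal C$ and $\otimes_{\mathcal C}:G\times H\to T$ a continuous bihomomorphism such that every continuous bihomomorphism $b:G\times H\to B$ with $B\in\mathcal C$ factors as $b=\tilde b\circ\otimes_{\mathcal C}$ for some continuous homomorphism $\tilde b:T\to B$. *)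

From HB Require Import structures.
From mathcomp Require Import all_boot all_order all_algebra.
From mathcomp Require Import all_classical all_reals all_analysis.

Set Implicit Arguments.
Unset Strict Implicit.
Unset Printing Implicit Defensive.

Import GRing.Theory.
Local Open Scope ring_scope.
Local Open Scope classical_set_scope.

(* A (full) subcategory is given by a
   class of objects, i.e. a predicate on [topologicalZmodType]. *)
Definition subcat := topologicalZmodType -> Prop.

Definition cont_hom (G B : topologicalZmodType) (f : G -> B) : Prop :=
  {morph f : x y / x + y} /\ continuous f.

Definition cont_bihom (G H A : topologicalZmodType) (b : G -> H -> A) : Prop :=
  (forall h : H, cont_hom (fun g : G => b g h)) /\
  (forall g : G, cont_hom (b g)) /\
  {for (0, 0), continuous (fun p : G * H => b p.1 p.2)}.

Definition has_tensor (C : subcat) : Prop :=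
  forall G H : topologicalZmodType, C G -> C H ->
  exists T : topologicalZmodType, C T /\
  exists t : G -> H -> T, cont_bihom t /\
    forall B : topologicalZmodType, C B ->
    forall b : G -> H -> B, cont_bihom b ->
    exists bt : T -> B, cont_hom bt /\ forall g h, b g h = bt (t g h).

Definition hausdorff_cat : subcat := fun G => hausdorff_space G.

Definition subcat_le (C D : subcat) : Prop := forall G, C G -> D G.

(* The tensor product in the class of all topological abelian groups (resp.
   of the Hausdorff ones) is built directly.  Take formal sums of pairs
   (g, h), identify two sums when no continuous bihomomorphism into the class
   distinguishes them, and give the resulting group the initial topology of
   the evaluation maps induced by these bihomomorphisms.  The universal
   property then holds by construction, and the group is Hausdorff as soon as
   every target is, because the evaluation maps separate points.  So one may
   take B^⊗ = A, resp. B^⊗ = A_2. *)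
From HB Require Import structures.
From mathcomp Require Import all_boot all_order all_algebra.
From mathcomp Require Import all_classical all_reals all_analysis.

Set Implicit Arguments.
Unset Strict Implicit.
Unset Printing Implicit Defensive.

Import GRing.Theory.
Local Open Scope ring_scope.
Local Open Scope classical_set_scope.

Lemma morph_addN (U V : zmodType) (f : U -> V) :
  {morph f : x y / x + y} -> {morph f : x / - x}.
Proof.
move=> fD x; have f0 : f 0 = 0.
  by apply/eqP; rewrite -(subrr (f 0)) -{2}[0]addr0 fD addrK.
by apply/eqP; rewrite -subr_eq0 opprK -fD addNr f0.
Qed.

Lemma cont_bihomNl (G H B : topologicalZmodType) (b : G -> H -> B) g h :
  cont_bihom b -> b (- g) h = - b g h.
Proof. by case=> /(_ h) [bD _] _; exact: (morph_addN bD). Qed.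

Section TensorProduct.
Variables (C : subcat) (G H : topologicalZmodType).

Definition bisum (B : topologicalZmodType) (b : G -> H -> B) (s : seq (G * H)) :=
  \sum_(p <- s) b p.1 p.2.

Definition tensor_equiv (s s' : seq (G * H)) : Prop :=
  forall (B : topologicalZmodType) (b : G -> H -> B), C B -> cont_bihom b ->
    bisum b s = bisum b s'.

(* A class is encoded by the predicate [tensor_equiv s] of its members. *)
Definition tensor := {P : set (seq (G * H)) | exists s, P = tensor_equiv s}.

Definition tensor_class (s : seq (G * H)) : tensor :=
  exist _ (tensor_equiv s) (ex_intro _ s erefl).

Definition tensor_repr (x : tensor) : seq (G * H) := projT1 (cid (proj2_sig x)).

Lemma tensor_reprK x : tensor_class (tensor_repr x) = x.
Proof.
case: x => P hP; rewrite /tensor_repr /=; case: (cid hP) => s /= e.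
by subst P; congr exist; exact: Prop_irrelevance.
Qed.

Lemma tensor_class_eq s s' : tensor_equiv s s' -> tensor_class s = tensor_class s'.
Proof.
move=> ss'; apply: eq_exist; apply/funext => u; apply/propext.
by split=> su B b CB hb; rewrite -(su B b CB hb) (ss' B b CB hb).
Qed.

Lemma tensor_class_inj s s' : tensor_class s = tensor_class s' -> tensor_equiv s s'.
Proof.
move=> /(congr1 (@proj1_sig _ _)) /= e.
have : tensor_equiv s' s' by [].
by rewrite -e => ss' B b CB hb; rewrite (ss' B b CB hb).
Qed.

Definition tensor_add x y := tensor_class (tensor_repr x ++ tensor_repr y).
Definition tensor_opp x :=
  tensor_class (map (fun p => (- p.1, p.2)) (tensor_repr x)).
Definition tensor_zero := tensor_class [::].

Definition tensor_eval (B : topologicalZmodType) (b : G -> H -> B) (x : tensor) :=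
  bisum b (tensor_repr x).

Lemma tensor_ext x y :
  (forall (B : topologicalZmodType) (b : G -> H -> B), C B -> cont_bihom b ->
    tensor_eval b x = tensor_eval b y) -> x = y.
Proof.
move=> xy; rewrite -(tensor_reprK x) -(tensor_reprK y).
exact: tensor_class_eq.
Qed.

Section Evaluation.
Variables (B : topologicalZmodType) (b : G -> H -> B).
Hypotheses (CB : C B) (hb : cont_bihom b).

Lemma tensor_evalE s : tensor_eval b (tensor_class s) = bisum b s.
Proof. exact: tensor_class_inj (tensor_reprK (tensor_class s)) B b CB hb. Qed.

Lemma tensor_evalD x y :
  tensor_eval b (tensor_add x y) = tensor_eval b x + tensor_eval b y.
Proof. by rewrite tensor_evalE /bisum big_cat. Qed.

Lemma tensor_evalN x : tensor_eval b (tensor_opp x) = - tensor_eval b x.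
Proof.
rewrite tensor_evalE /bisum big_map -sumrN.
by apply: eq_bigr => p _; rewrite cont_bihomNl.
Qed.

Lemma tensor_eval0 : tensor_eval b tensor_zero = 0.
Proof. by rewrite tensor_evalE /bisum big_nil. Qed.

End Evaluation.

Lemma tensor_addA : associative tensor_add.
Proof.
by move=> x y z; apply: tensor_ext => B b CB hb; rewrite !tensor_evalD // addrA.
Qed.

Lemma tensor_addC : commutative tensor_add.
Proof.
by move=> x y; apply: tensor_ext => B b CB hb; rewrite !tensor_evalD // addrC.
Qed.

Lemma tensor_add0 : left_id tensor_zero tensor_add.
Proof.
move=> x; apply: tensor_ext => B b CB hb.
by rewrite tensor_evalD // tensor_eval0 // add0r.
Qed.

Lemma tensor_addN : left_inverse tensor_zero tensor_opp tensor_add.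
Proof.
move=> x; apply: tensor_ext => B b CB hb.
by rewrite tensor_evalD // tensor_evalN // tensor_eval0 // addNr.
Qed.

HB.instance Definition _ := gen_eqMixin tensor.
HB.instance Definition _ := gen_choiceMixin tensor.
HB.instance Definition _ :=
  GRing.isZmodule.Build tensor tensor_addA tensor_addC tensor_add0 tensor_addN.

Inductive tensor_basic : set tensor -> Prop :=
| tensor_basicT : tensor_basic setT
| tensor_basic_eval (B : topologicalZmodType) (b : G -> H -> B) (V : set B) :
    C B -> cont_bihom b -> open V -> tensor_basic (tensor_eval b @^-1` V)
| tensor_basicI U W : tensor_basic U -> tensor_basic W -> tensor_basic (U `&` W).

Definition tensor_open (U : set tensor) : Prop :=
  forall x, U x -> exists2 W, tensor_basic W & W x /\ W `<=` U.

Lemma tensor_openT : tensor_open setT.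
Proof. by move=> x _; exists setT => //; constructor. Qed.

Lemma tensor_openI : setI_closed tensor_open.
Proof.
move=> U V oU oV x [/oU [W1 b1 [w1 s1]] /oV [W2 b2 [w2 s2]]].
exists (W1 `&` W2); first exact: tensor_basicI.
by split=> [|y [/s1 ? /s2 ?]].
Qed.

Lemma tensor_open_bigU (I : Type) (f : I -> set tensor) :
  (forall i, tensor_open (f i)) -> tensor_open (\bigcup_i f i).
Proof.
move=> fo x [i _ /(fo i) [W bW [wx sW]]]; exists W => //.
by split=> // y /sW; exists i.
Qed.

HB.instance Definition _ :=
  isOpenTopological.Build tensor tensor_openT tensor_openI tensor_open_bigU.

Lemma tensor_basic_nbhs W x : tensor_basic W -> W x -> nbhs x W.
Proof.
move=> bW wx; exists W; split=> //.
change (tensor_open W) => y wy.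
by exists W => //; split.
Qed.

Lemma tensor_eval_continuous (B : topologicalZmodType) (b : G -> H -> B) :
  C B -> cont_bihom b -> continuous (tensor_eval b).
Proof.
move=> CB hb x A; rewrite nbhsE => -[V [oV Vx] sV].
apply: (filterS (fun y => @sV (tensor_eval b y))).
exact: tensor_basic_nbhs (tensor_basic_eval CB hb oV) _.
Qed.

Lemma continuous_into_tensor (X : topologicalType) (f : X -> tensor) x :
  (forall (B : topologicalZmodType) (b : G -> H -> B), C B -> cont_bihom b ->
     {for x, continuous (tensor_eval b \o f)}) -> {for x, continuous f}.
Proof.
move=> fb A [U [oU Ux sU]]; have [W bW [wx sW]] := oU _ Ux.
apply: (filterS (subset_trans sW sU)) => /=.
elim: bW wx {sW} => [|B b V CB hb oV|U1 U2 _ IH1 _ IH2] wx.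
- exact: filterT.
- by apply: (fb B b CB hb); rewrite nbhsE; exists V.
- by case: wx => /IH1 ? /IH2 ?; exact: filterI.
Qed.

Lemma tensor_sub_continuous : continuous (fun x : tensor * tensor => x.1 - x.2).
Proof.
move=> x; apply: continuous_into_tensor => B b CB hb.
have -> : tensor_eval b \o (fun x : tensor * tensor => x.1 - x.2) =
    (fun y : B * B => y.1 - y.2) \o
    (fun x : tensor * tensor => (tensor_eval b x.1, tensor_eval b x.2)).
  by apply/funext => y /=; rewrite tensor_evalD // tensor_evalN.
apply: continuous_comp; last exact: sub_continuous.
have evc := tensor_eval_continuous CB hb.
by apply: cvg_pair; apply: continuous_comp (evc _); [exact: cvg_fst | exact: cvg_snd].
Qed.

HB.instance Definition _ :=
  PreTopologicalNmodule_isTopologicalZmodule.Build tensor tensor_sub_continuous.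

Definition tmul (g : G) (h : H) : tensor := tensor_class [:: (g, h)].

Lemma tensor_eval_tmul (B : topologicalZmodType) (b : G -> H -> B) g h :
  C B -> cont_bihom b -> tensor_eval b (tmul g h) = b g h.
Proof. by move=> CB hb; rewrite tensor_evalE // /bisum big_seq1. Qed.

Lemma tmul_cont_bihom : cont_bihom tmul.
Proof.
split; [move=> h; split | split; [move=> g; split |]].
- move=> g g'; apply: tensor_ext => B b CB hb.
  rewrite tensor_evalD // !tensor_eval_tmul //.
  by case: hb => /(_ h) [bD _] _; exact: bD.
- move=> g; apply: continuous_into_tensor => B b CB hb.
  have -> : tensor_eval b \o tmul^~ h = b^~ h by apply/funext => ?; exact: tensor_eval_tmul.
  by case: hb => /(_ h) [_ bc] _; exact: bc.
- move=> h h'; apply: tensor_ext => B b CB hb.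
  rewrite tensor_evalD // !tensor_eval_tmul //.
  by case: hb => _ [/(_ g) [bD _] _]; exact: bD.
- move=> h; apply: continuous_into_tensor => B b CB hb.
  have -> : tensor_eval b \o tmul g = b g by apply/funext => ?; exact: tensor_eval_tmul.
  by case: hb => _ [/(_ g) [_ bc] _]; exact: bc.
- apply: continuous_into_tensor => B b CB hb.
  have -> : tensor_eval b \o (fun p : G * H => tmul p.1 p.2) = (fun p => b p.1 p.2).
    by apply/funext => ?; exact: tensor_eval_tmul.
  by case: hb => _ [].
Qed.

Lemma tensor_universal (B : topologicalZmodType) (b : G -> H -> B) :
  C B -> cont_bihom b ->
  exists bt : tensor -> B, cont_hom bt /\ forall g h, b g h = bt (tmul g h).
Proof.
move=> CB hb; exists (tensor_eval b); split.
  by split; [move=> x y; exact: tensor_evalD | exact: tensor_eval_continuous].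
by move=> g h; rewrite tensor_eval_tmul.
Qed.

Lemma tensor_hausdorff :
  subcat_le C hausdorff_cat -> hausdorff_space tensor.
Proof.
move=> hC p q pq; apply: tensor_ext => B b CB hb; apply: (hC B CB) => A V nA nV.
have [z [Az Vz]] := pq _ _ (tensor_eval_continuous CB hb nA)
                           (tensor_eval_continuous CB hb nV).
by exists (tensor_eval b z).
Qed.

End TensorProduct.

Lemma has_tensor_of_tensor_closed (C : subcat) :
  (forall G H : topologicalZmodType, C G -> C H -> C (tensor C G H)) ->
  has_tensor C.
Proof.
move=> tC G H CG CH; exists (tensor C G H); split; first exact: tC.
exists (@tmul C G H); split; first exact: tmul_cont_bihom.
by move=> B CB b hb; exact: tensor_universal.
Qed.

Theorem proposition2p11 :
  (forall B : subcat, exists B' : subcat, subcat_le B B' /\ has_tensor B') /\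
  (forall B : subcat, subcat_le B hausdorff_cat ->
     exists B' : subcat,
       subcat_le B B' /\ subcat_le B' hausdorff_cat /\ has_tensor B').
Proof.
split=> [B | B BA2].
  exists (fun _ => True); split=> //.
  exact: has_tensor_of_tensor_closed.
exists hausdorff_cat; split=> //; split=> //.
apply: has_tensor_of_tensor_closed => G H _ _.
exact: tensor_hausdorff.
Qed.
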